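(* Let $l\in\mathbb N-\frac12$ and let $\Phi_l:U(\tilde{\mathfrak g}^{(l)})\to U(\tilde{\mathcal H}^{(l)})_{(z)}$ be the algebra homomorphism which is the identity on $U(\tilde{\mathcal H}^{(l)})$ and sends $e,f,h$ to $E,F,H$ respectively. For a $\tilde{\mathcal H}^{(l)}$-module $M$ let $\mathcal F(M)$ be the $\tilde{\mathfrak g}^{(l)}$-module obtained from the $U(\tilde{\mathcal H}^{(l)})_{(z)}$-module $U(\tilde{\mathcal H}^{(l)})_{(z)}\otimes_{U(\tilde{\mathcal H}^{(l)})}M$ by pulling back along $\Phi_l$. Then $\mathcal F$ is a functor from $\tilde{\mathcal H}^{(l)}$-modules to $\tilde{\mathfrak g}^{(l)}$-modules such that $\mathcal F(M)=0$ for every simple $\tilde{\mathcal H}^{(l)}$-module $M$ on which $z$ acts as $0$, and $\mathcal F(M)$ is a simple $\tilde{\mathfrak g}^{(l)}$-module for every simple $\tilde{\mathcal H}^{(l)}$-module $M$ on which $z$ acts as a nonzero scalar.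
   Context: For $l\in\mathbb N-\frac12=\{\frac12,\frac32,\dots\}$, $\tilde{\mathfrak g}^{(l)}$ is the complex Lie algebra with basis $e,h,f,p_0,\dots,p_{2l},z$ and brackets $[h,e]=2e$, $[h,f]=-2f$, $[e,f]=h$, $[h,p_k]=2(l-k)p_k$, $[e,p_k]=kp_{k-1}$, $[f,p_k]=(2l-k)p_{k+1}$ (with $p_{-1}=p_{2l+1}=0$), $z$ central, and $[p_k,p_{k'}]=\delta_{k+k',2l}(-1)^{k+l+\frac12}k!(2l-k)!\,z$. $\tilde{\mathcal H}^{(l)}=\mathrm{span}\{p_0,\dots,p_{2l},z\}$. $U(\tilde{\mathcal H}^{(l)})_{(z)}$ is the localization of $U(\tilde{\mathcal H}^{(l)})$ at $\{z^i:i\ge0\}$. The elements $E,F,H\in U(\tilde{\mathcal H}^{(l)})_{(z)}$ are $E=\frac{1}{z}\sum_{k=1}^{2l}(-1)^{k+l+\frac12}\frac{l-k}{(k-1)!(2l-k)!}p_{k-1}p_{2l-k}$, $F=\frac{1}{z}\sum_{k=1}^{2l}(-1)^{k+l-\frac12}\frac{l-k}{(k-1)!(2l-k)!}p_{k}p_{2l-k+1}$, $H=\frac{2}{z}\sum_{k=0}^{l-\frac12}(-1)^{k+l-\frac12}\frac{l-k}{k!(2l-k)!}p_{2l-k}p_k-\frac{(l+\frac12)^2}{2}$; it is given that $\Phi_l$ is a well-defined algebra homomorphism. *)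

From HB Require Import structures.
From mathcomp Require Import all_boot all_order all_algebra.
Set Implicit Arguments. Unset Strict Implicit. Unset Printing Implicit Defensive.
Import Order.TTheory GRing.Theory Num.Theory.
Local Open Scope ring_scope.

(* Convention: l = n + 1/2 with n : nat, so 2l = twol n = 2n+1 and
   l + 1/2 = n+1, l - 1/2 = n.  Indices k of p_k range over 0..twol n. *)
Definition twol (n : nat) : nat := n.*2.+1.

Inductive gbasis := Be | Bh | Bf | Bp of nat | Bz.

Definition gvalid (n : nat) (b : gbasis) : bool :=
  match b with Bp k => (k <= twol n)%N | _ => true end.

Section Defs.
Variable K : fieldType.

Definition sgn (k : nat) : K := (-1) ^+ k.

(* coefficient of z in [p_k, p_k'] *)
Definition pbr (n k k' : nat) : K :=
  if (k + k' == twol n)%N then sgn (k + n.+1)%N * (k`! * (twol n - k)`!)%N%:R else 0.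

(* l - k as an element of K *)
Definition lmk (n k : nat) : K := ((twol n)%:R - (k.*2)%:R) / 2%:R.

Variable V : lmodType K.

Definition Hmod_axioms (n : nat) (p : nat -> V -> V) (z : V -> V) : Prop :=
  [/\ forall k, (k <= twol n)%N -> forall (a : K) u v, p k (a *: u + v) = a *: p k u + p k v,
      forall (a : K) u v, z (a *: u + v) = a *: z u + z v,
      forall k v, (k <= twol n)%N -> z (p k v) = p k (z v) &
      forall k k' v, (k <= twol n)%N -> (k' <= twol n)%N ->
        p k (p k' v) - p k' (p k v) = pbr n k k' *: z v].

Definition Hsubmod n (p : nat -> V -> V) (z : V -> V) (S : V -> Prop) : Prop :=
  [/\ S 0, forall (a : K) u v, S u -> S v -> S (a *: u + v),
      forall k v, (k <= twol n)%N -> S v -> S (p k v) &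
      forall v, S v -> S (z v)].

Definition Hsimple n (p : nat -> V -> V) (z : V -> V) : Prop :=
  (exists v : V, v != 0) /\
  forall S, Hsubmod n p z S -> (exists v, S v /\ v != 0) -> forall v, S v.

(* The localization U(H)_(z) (x)_{U(H)} M, realised as fractions z^{-k} m,
   represented by pairs (k, m). *)
Definition loc := (nat * V)%type.

Definition loc_eq (z : V -> V) (x y : loc) : Prop :=
  exists j : nat, iter (j + y.1) z x.2 = iter (j + x.1) z y.2.

Definition loc_zero : loc := (0%N, 0).
Definition loc_add (z : V -> V) (x y : loc) : loc :=
  ((x.1 + y.1)%N, iter y.1 z x.2 + iter x.1 z y.2).
Definition loc_scale (a : K) (x : loc) : loc := (x.1, a *: x.2).

(* numerators of E, F, H (i.e. z*E, z*F, and the quadratic part of z*H) *)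
Definition Enum n (p : nat -> V -> V) (v : V) : V :=
  \sum_(1%N <= k < (twol n).+1)
     ((sgn (k + n.+1)%N * lmk n k / ((k.-1)`! * (twol n - k)`!)%N%:R)
        *: p k.-1 (p (twol n - k)%N v)).

Definition Fnum n (p : nat -> V -> V) (v : V) : V :=
  \sum_(1%N <= k < (twol n).+1)
     ((sgn (k + n)%N * lmk n k / ((k.-1)`! * (twol n - k)`!)%N%:R)
        *: p k (p ((twol n - k)%N.+1) v)).

Definition Hnum n (p : nat -> V -> V) (v : V) : V :=
  2%:R *: \sum_(0%N <= k < n.+1)
     ((sgn (k + n)%N * lmk n k / (k`! * (twol n - k)`!)%N%:R)
        *: p (twol n - k)%N (p k v)).

(* the constant (l+1/2)^2/2 *)
Definition Hconst (n : nat) : K := (n.+1 ^ 2)%:R / 2%:R.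

(* action of g~ on F(M) obtained by pulling back along Phi_l *)
Definition gact n (p : nat -> V -> V) (z : V -> V) (b : gbasis) (x : loc) : loc :=
  match b with
  | Be => (x.1.+1, Enum n p x.2)
  | Bf => (x.1.+1, Fnum n p x.2)
  | Bh => (x.1.+1, Hnum n p x.2 - Hconst n *: z x.2)
  | Bp k => (x.1, p k x.2)
  | Bz => (x.1, z x.2)
  end.

End Defs.

(* Lie bracket of g~^{(l)} on basis elements, as a linear combination *)
Definition gbracket (K : fieldType) (n : nat) (b b' : gbasis) : seq (K * gbasis) :=
  match b, b' with
  | Bh, Be => [:: (2%:R, Be)]
  | Be, Bh => [:: (- 2%:R, Be)]
  | Bh, Bf => [:: (- 2%:R, Bf)]
  | Bf, Bh => [:: (2%:R, Bf)]
  | Be, Bf => [:: (1, Bh)]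
  | Bf, Be => [:: (-1, Bh)]
  | Bh, Bp k => [:: (2%:R * lmk K n k, Bp k)]
  | Bp k, Bh => [:: (- (2%:R * lmk K n k), Bp k)]
  | Be, Bp k => [:: (k%:R, Bp k.-1)]
  | Bp k, Be => [:: (- k%:R, Bp k.-1)]
  | Bf, Bp k => [:: ((twol n - k)%N%:R, Bp k.+1)]
  | Bp k, Bf => [:: (- (twol n - k)%N%:R, Bp k.+1)]
  | Bp k, Bp k' => [:: (pbr K n k k', Bz)]
  | _, _ => [::]
  end.

Section Defs2.
Variable K : fieldType.
Variable V : lmodType K.

Definition lincomb_act n (p : nat -> V -> V) (z : V -> V) (c : seq (K * gbasis)) (x : loc V)
  : loc V :=
  foldr (fun cb acc => loc_add z (loc_scale cb.1 (gact n p z cb.2 x)) acc) (loc_zero V) c.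

Definition gmod_brackets n (p : nat -> V -> V) (z : V -> V) : Prop :=
  forall b b' x, gvalid n b -> gvalid n b' ->
    loc_eq z (loc_add z (gact n p z b (gact n p z b' x))
                        (loc_scale (-1) (gact n p z b' (gact n p z b x))))
             (lincomb_act n p z (gbracket K n b b') x).

Definition gmod_struct n (p : nat -> V -> V) (z : V -> V) : Prop :=
  [/\ forall b x y, gvalid n b -> loc_eq z x y -> loc_eq z (gact n p z b x) (gact n p z b y),
      forall b (a : K) x y, gvalid n b ->
        loc_eq z (gact n p z b (loc_add z (loc_scale a x) y))
                 (loc_add z (loc_scale a (gact n p z b x)) (gact n p z b y)) &
      gmod_brackets n p z].

Definition gsubmod n (p : nat -> V -> V) (z : V -> V) (S : loc V -> Prop) : Prop :=
  [/\ forall x y, loc_eq z x y -> S x -> S y,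
      S (loc_zero V),
      forall (a : K) x y, S x -> S y -> S (loc_add z (loc_scale a x) y) &
      forall b x, gvalid n b -> S x -> S (gact n p z b x)].

Definition gsimple n (p : nat -> V -> V) (z : V -> V) : Prop :=
  (exists x, ~ loc_eq z x (loc_zero V)) /\
  forall S, gsubmod n p z S -> (exists x, S x /\ ~ loc_eq z x (loc_zero V)) -> forall x, S x.

Definition loc_trivial (z : V -> V) : Prop := forall x, loc_eq z x (loc_zero V).

End Defs2.

Definition Hmod_hom (K : fieldType) (V W : lmodType K) n
  (p : nat -> V -> V) (z : V -> V) (p' : nat -> W -> W) (z' : W -> W) (phi : V -> W) : Prop :=
  [/\ forall (a : K) u v, phi (a *: u + v) = a *: phi u + phi v,
      forall k v, (k <= twol n)%N -> phi (p k v) = p' k (phi v) &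
      forall v, phi (z v) = z' (phi v)].

(* F on morphisms: z^{-k} m |-> z^{-k} phi(m), i.e. id (x) phi *)
Definition loc_map (K : fieldType) (V W : lmodType K) (phi : V -> W) (x : loc V) : loc W :=
  (x.1, phi x.2).

Definition gmod_hom (K : fieldType) (V W : lmodType K) n
  (p : nat -> V -> V) (z : V -> V) (p' : nat -> W -> W) (z' : W -> W)
  (F : loc V -> loc W) : Prop :=
  [/\ forall x y, loc_eq z x y -> loc_eq z' (F x) (F y),
      forall (a : K) x y, loc_eq z' (F (loc_add z (loc_scale a x) y))
                                    (loc_add z' (loc_scale a (F x)) (F y)) &
      forall b x, gvalid n b -> loc_eq z' (F (gact n p z b x)) (gact n p' z' b (F x))].

(* Standing assumption of the paper: Phi_l is a well-defined algebra
   homomorphism, i.e. E, F, H together with the p_k, z satisfy the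
   bracket relations of g~ (in U(H~)_(z), hence on every localized module). *)
Definition Phi_hom (K : fieldType) (n : nat) : Prop :=
  forall (V : lmodType K) (p : nat -> V -> V) (z : V -> V),
    Hmod_axioms n p z -> gmod_brackets n p z.

From HB Require Import structures.
From mathcomp Require Import all_boot all_order all_algebra zify.
Set Implicit Arguments. Unset Strict Implicit. Unset Printing Implicit Defensive.
Import GRing.Theory Num.Theory.
Local Open Scope ring_scope.

(* An element of F(M) = U(H)_(z) (x)_{U(H)} M is a fraction z^{-k} m, encoded
   as a pair (k, m).  Every basis element b of g~ acts on fractions by
   z^{-k} m |-> z^{-(k + s)} T m, where the shift s is 1 for e, f, h (whose
   images E, F, H carry one factor 1/z) and 0 for p_k, z, and where the
   numerator T is a linear map built from the p_k and z.
   1. Linear maps and intertwiners are closed under the operations used to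
      build these numerators (sums, scalings, composition, iteration).
   2. Hence every numerator is linear, commutes with z, and is natural with
      respect to H~-module morphisms.
   3. Any "fraction-shaped" action with a z-equivariant linear numerator is
      well defined and linear on fractions; together with the assumption that
      Phi_l is a homomorphism this makes F(M) a g~-module, and id (x) phi a
      g~-module morphism.
   4. If z = 0 every fraction vanishes.  If z = c != 0, every fraction is
      equivalent to one with denominator 1, so a g~-submodule of F(M) is
      determined by an H~-submodule of M, and simplicity transfers. *)

Section LinearMaps.
Variable K : fieldType.

Definition lin_map (V W : lmodType K) (T : V -> W) : Prop :=
  forall (a : K) u v, T (a *: u + v) = a *: T u + T v.

Definition intertwines (V W : lmodType K) (phi : V -> W) (T : V -> V) (T' : W -> W)
  : Prop := forall v, phi (T v) = T' (phi v).

Section Basic.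
Variables U V W : lmodType K.

Lemma lin_map0 (T : V -> W) : lin_map T -> T 0 = 0.
Proof. by move=> HT; have := HT (-1) 0 0; rewrite scaler0 addr0 scaleN1r addNr. Qed.

Lemma lin_mapD (T : V -> W) : lin_map T -> forall u v, T (u + v) = T u + T v.
Proof. by move=> HT u v; have := HT 1 u v; rewrite !scale1r. Qed.

Lemma lin_mapZ (T : V -> W) : lin_map T -> forall a u, T (a *: u) = a *: T u.
Proof. by move=> HT a u; have := HT a u 0; rewrite !addr0 (lin_map0 HT) addr0. Qed.

Lemma lin_map_sum (T : V -> W) (I : Type) (r : seq I) (F : I -> V) :
  lin_map T -> T (\sum_(i <- r) F i) = \sum_(i <- r) T (F i).
Proof. by move=> HT; apply: (big_morph T (lin_mapD HT) (lin_map0 HT)). Qed.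

Lemma lin_map_comp (T : V -> W) (S : U -> V) :
  lin_map T -> lin_map S -> lin_map (T \o S).
Proof. by move=> HT HS a u v; rewrite /= HS HT. Qed.

Lemma lin_map_scale (c : K) (T : V -> W) : lin_map T -> lin_map (fun v => c *: T v).
Proof. by move=> HT a u v; rewrite HT scalerDr !scalerA mulrC. Qed.

Lemma lin_map_sub (T S : V -> W) :
  lin_map T -> lin_map S -> lin_map (fun v => T v - S v).
Proof. by move=> HT HS a u v; rewrite HT HS scalerBr opprD addrACA. Qed.

Lemma lin_map_big (I : eqType) (r : seq I) (F : I -> V -> W) :
  (forall i, i \in r -> lin_map (F i)) -> lin_map (fun v => \sum_(i <- r) F i v).
Proof.
move=> HF a u v; rewrite scaler_sumr -big_split /=.
by apply: eq_big_seq => i /HF ->.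
Qed.
End Basic.

Section Intertwiners.
Variables V W : lmodType K.
Variable phi : V -> W.
Hypothesis lin_phi : lin_map phi.

Lemma intertwines_comp (T S : V -> V) (T' S' : W -> W) :
  intertwines phi T T' -> intertwines phi S S' -> intertwines phi (T \o S) (T' \o S').
Proof. by move=> HT HS v; rewrite /= HT HS. Qed.

Lemma intertwines_scale (c : K) (T : V -> V) (T' : W -> W) :
  intertwines phi T T' -> intertwines phi (fun v => c *: T v) (fun w => c *: T' w).
Proof. by move=> HT v; rewrite (lin_mapZ lin_phi) HT. Qed.

Lemma intertwines_sub (T S : V -> V) (T' S' : W -> W) :
  intertwines phi T T' -> intertwines phi S S' ->
  intertwines phi (fun v => T v - S v) (fun w => T' w - S' w).
Proof.
by move=> HT HS v; rewrite -scaleN1r addrC lin_phi HT HS scaleN1r addrC.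
Qed.

Lemma intertwines_big (I : eqType) (r : seq I) (F : I -> V -> V) (G : I -> W -> W) :
  (forall i, i \in r -> intertwines phi (F i) (G i)) ->
  intertwines phi (fun v => \sum_(i <- r) F i v) (fun w => \sum_(i <- r) G i w).
Proof. by move=> HF v; rewrite lin_map_sum //; apply: eq_big_seq => i /HF ->. Qed.

Lemma intertwines_iter (z : V -> V) (z' : W -> W) k :
  intertwines phi z z' -> intertwines phi (iter k z) (iter k z').
Proof. by move=> Hz; elim: k => [|k IH] v //=; rewrite Hz IH. Qed.
End Intertwiners.

Section Iterates.
Variable V : lmodType K.
Variable z : V -> V.

Lemma lin_map_iter k : lin_map z -> lin_map (iter k z).
Proof. by move=> Hz; elim: k => [|k IH] a u v //=; rewrite IH Hz. Qed.

Lemma iter_commute (T : V -> V) : intertwines z T T ->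
  forall k v, iter k z (T v) = T (iter k z v).
Proof. by move=> HT; elim=> [|k IH] v //=; rewrite IH HT. Qed.
End Iterates.
End LinearMaps.

Section Fractions.
Variable K : fieldType.
Variable V : lmodType K.
Variable z : V -> V.

Lemma loc_eq_refl (x : loc V) : loc_eq z x x.
Proof. by exists 0%N. Qed.

Lemma loc_eq_sym (x y : loc V) : loc_eq z x y -> loc_eq z y x.
Proof. by case=> j E; exists j. Qed.

Definition frac_act (s : nat) (T : V -> V) (x : loc V) : loc V := ((s + x.1)%N, T x.2).

Variables (s : nat) (T : V -> V).
Hypothesis lin_z : lin_map z.
Hypothesis lin_T : lin_map T.
Hypothesis T_z : intertwines z T T.

Lemma frac_act_wd (x y : loc V) :
  loc_eq z x y -> loc_eq z (frac_act s T x) (frac_act s T y).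
Proof.
case=> j E; exists j; have := congr1 (iter s z) E; rewrite -!iterD => Es.
by rewrite /= !(addnCA j) !(iter_commute T_z) Es.
Qed.

Lemma frac_act_lin (a : K) (x y : loc V) :
  loc_eq z (frac_act s T (loc_add z (loc_scale a x) y))
           (loc_add z (loc_scale a (frac_act s T x)) (frac_act s T y)).
Proof.
have lin_zk k : lin_map (iter k z) by exact: lin_map_iter.
exists 0%N; rewrite /= (lin_mapD lin_T) (lin_mapZ (lin_zk _)) (lin_mapZ lin_T).
rewrite -!(iter_commute T_z) !(lin_mapD (lin_zk _)) !(lin_mapZ (lin_zk _)) -!iterD.
by congr (_ *: iter _ z _ + iter _ z _); lia.
Qed.
End Fractions.

Section Numerators.
Variable K : fieldType.
Variable n : nat.

Definition pquad (V : lmodType K) (r : seq nat) (c : nat -> K) (i j : nat -> nat)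
  (p : nat -> V -> V) : V -> V :=
  fun v => \sum_(k <- r) c k *: p (i k) (p (j k) v).

Definition gshift (b : gbasis) : nat := match b with Be | Bh | Bf => 1 | _ => 0 end.

Definition gnum (V : lmodType K) (p : nat -> V -> V) (z : V -> V) (b : gbasis)
  : V -> V :=
  match b with
  | Be => Enum n p
  | Bf => Fnum n p
  | Bh => fun v => Hnum n p v - Hconst K n *: z v
  | Bp k => p k
  | Bz => z
  end.

Lemma gact_frac (V : lmodType K) (p : nat -> V -> V) (z : V -> V) b x :
  gact n p z b x = frac_act (gshift b) (gnum p z b) x.
Proof. by case: b. Qed.

Section Linearity.
Variable V : lmodType K.
Variables (p : nat -> V -> V) (z : V -> V).
Hypothesis lin_p : forall k, (k <= twol n)%N -> lin_map (p k).

Lemma lin_pquad r c i j :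
  (forall k, k \in r -> (i k <= twol n)%N /\ (j k <= twol n)%N) -> lin_map (pquad r c i j p).
Proof.
move=> Hr; apply: lin_map_big => k /Hr [hi hj].
by apply/lin_map_scale/lin_map_comp; apply: lin_p.
Qed.

(* The numerators E, F, H (which unfold to instances of pquad) are linear. *)
Lemma lin_gnum b : lin_map z -> gvalid n b -> lin_map (gnum p z b).
Proof.
move=> lin_z; case: b => [|||k|] //= hk; last exact: lin_p.
- by apply: lin_pquad => k; rewrite mem_index_iota; lia.
- apply: lin_map_sub (lin_map_scale _ lin_z); apply: lin_map_scale.
  by apply: lin_pquad => k; rewrite mem_index_iota /twol; lia.
- by apply: lin_pquad => k; rewrite mem_index_iota; lia.
Qed.
End Linearity.

Section Naturality.
Variables V W : lmodType K.
Variables (p : nat -> V -> V) (z : V -> V) (p' : nat -> W -> W) (z' : W -> W).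
Variable phi : V -> W.
Hypothesis lin_phi : lin_map phi.
Hypothesis phi_p : forall k, (k <= twol n)%N -> intertwines phi (p k) (p' k).

Lemma intertwines_pquad r c i j :
  (forall k, k \in r -> (i k <= twol n)%N /\ (j k <= twol n)%N) ->
  intertwines phi (pquad r c i j p) (pquad r c i j p').
Proof.
move=> Hr; apply: intertwines_big => // k /Hr [hi hj].
by apply/(intertwines_scale lin_phi)/intertwines_comp; apply: phi_p.
Qed.

Lemma intertwines_gnum b : intertwines phi z z' -> gvalid n b ->
  intertwines phi (gnum p z b) (gnum p' z' b).
Proof.
move=> phi_z; case: b => [|||k|] //= hk; last exact: phi_p.
- by apply: intertwines_pquad => k; rewrite mem_index_iota; lia.
- apply: (intertwines_sub lin_phi); last exact: intertwines_scale.
  apply: intertwines_scale => //.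
  by apply: intertwines_pquad => k; rewrite mem_index_iota /twol; lia.
- by apply: intertwines_pquad => k; rewrite mem_index_iota; lia.
Qed.
End Naturality.
End Numerators.

(* F(M) is a g~-module: the action is fraction-shaped with linear,
   z-equivariant numerators, and the brackets hold because Phi_l is a
   homomorphism. *)
Lemma gmod_struct_of_Hmod (K : fieldType) n (V : lmodType K)
    (p : nat -> V -> V) (z : V -> V) :
  Phi_hom K n -> Hmod_axioms n p z -> gmod_struct n p z.
Proof.
move=> HPhi Hax; case: (Hax) => lin_p lin_z z_p _.
have gnum_z b : gvalid n b -> intertwines z (gnum n p z b) (gnum n p z b).
  by move=> hb; apply: intertwines_gnum => // k hk v; exact: z_p.
split; last exact: HPhi.
- by move=> b x y hb; rewrite !gact_frac; apply: frac_act_wd; exact: gnum_z.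
- move=> b a x y hb; rewrite !gact_frac.
  by apply: frac_act_lin => //; [exact: lin_gnum | exact: gnum_z].
Qed.

Lemma gmod_hom_loc_map (K : fieldType) n (V W : lmodType K)
    (p : nat -> V -> V) (z : V -> V) (p' : nat -> W -> W) (z' : W -> W)
    (phi : V -> W) :
  Hmod_hom n p z p' z' phi -> gmod_hom n p z p' z' (loc_map phi).
Proof.
case=> lin_phi phi_p phi_z.
have phi_zk k : intertwines phi (iter k z) (iter k z') by exact: intertwines_iter.
split.
- by move=> x y [j E]; exists j; rewrite /= -!phi_zk E.
- by move=> a x y; exists 0%N; rewrite /= (lin_mapD lin_phi) !phi_zk (lin_mapZ lin_phi).
- move=> b x hb; rewrite !gact_frac /frac_act /loc_map /=.
  have phi_pk k : (k <= twol n)%N -> intertwines phi (p k) (p' k).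
    by move=> hk v; exact: phi_p.
  by rewrite (intertwines_gnum lin_phi phi_pk phi_z hb); exact: loc_eq_refl.
Qed.

(* If z acts by 0, every fraction z^{-k} m = z^{-k-1} (z m) vanishes. *)
Lemma loc_trivial_z0 (K : fieldType) (V : lmodType K) (z : V -> V) :
  (forall v, z v = 0) -> loc_trivial z.
Proof. by move=> z0 x; exists 1%N; rewrite addn0 add1n /= !z0. Qed.

Section ScalarCentre.
Variable K : fieldType.
Variable V : lmodType K.
Variables (z : V -> V) (c : K).
Hypothesis z_c : forall v, z v = c *: v.
Hypothesis c_neq0 : c != 0.

Lemma iter_scalar k v : iter k z v = c ^+ k *: v.
Proof. by elim: k v => [|k IH] v /=; rewrite ?expr0 ?scale1r // IH z_c scalerA exprS. Qed.

Lemma loc_eq0_scalar (x : loc V) : loc_eq z x (loc_zero V) <-> x.2 = 0.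
Proof.
split; last by move=> x0; exists 0%N; rewrite /= x0 !iter_scalar !scaler0.
case=> j; rewrite /= !iter_scalar scaler0 => /eqP.
by rewrite scaler_eq0 expf_eq0 (negbTE c_neq0) andbF => /eqP.
Qed.

Lemma loc_eq_normal (x : loc V) : loc_eq z x (0%N, (c ^+ x.1)^-1 *: x.2).
Proof.
exists 0%N; rewrite /= !add0n iter_scalar scalerA.
by rewrite divff ?scale1r // expf_neq0.
Qed.
End ScalarCentre.

Lemma Hsubmod_restrict (K : fieldType) n (V : lmodType K)
    (p : nat -> V -> V) (z : V -> V) (S : loc V -> Prop) :
  gsubmod n p z S -> Hsubmod n p z (fun v => S (0%N, v)).
Proof.
case=> _ S0 S_lin S_act; split => //.
- by move=> a u v Su Sv; exact: (S_lin a (0%N, u) (0%N, v)).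
- by move=> k v hk Sv; exact: (S_act (Bp k) (0%N, v)).
- by move=> v Sv; exact: (S_act Bz (0%N, v)).
Qed.

(* For z = c != 0, a nonzero g~-submodule of F(M) contains all denominator-free
   fractions by simplicity of M, hence every fraction. *)
Lemma gsimple_scalar (K : fieldType) n (V : lmodType K)
    (p : nat -> V -> V) (z : V -> V) (c : K) :
  Hsimple n p z -> c != 0 -> (forall v, z v = c *: v) -> gsimple n p z.
Proof.
move=> [[v0 v0_neq0] simpleM] c_neq0 z_c.
have eq0 := loc_eq0_scalar z_c c_neq0; have normal := loc_eq_normal z_c c_neq0.
split; first by exists (0%N, v0); rewrite eq0; exact/eqP.
move=> S HS [x [Sx x_neq0]] y; case: (HS) => S_eq _ _ _.
have S_all : forall v, S (0%N, v).
  apply: simpleM; first exact: Hsubmod_restrict.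
  exists ((c ^+ x.1)^-1 *: x.2); split; first exact: S_eq (normal x) Sx.
  rewrite scaler_eq0 negb_or invr_eq0 expf_neq0 //=.
  by apply/eqP => x2_0; apply: x_neq0; rewrite eq0.
exact: S_eq (loc_eq_sym (normal y)) (S_all _).
Qed.

Theorem theorem1 (K : numClosedFieldType) (n : nat) (HPhi : Phi_hom K n) :
  (* F(M) is a g~-module for every H~-module M *)
  (forall (V : lmodType K) (p : nat -> V -> V) (z : V -> V),
      Hmod_axioms n p z -> gmod_struct n p z) /\
  (* F maps H~-module morphisms to g~-module morphisms ... *)
  (forall (V W : lmodType K) (p : nat -> V -> V) (z : V -> V)
          (p' : nat -> W -> W) (z' : W -> W) (phi : V -> W),
      Hmod_axioms n p z -> Hmod_axioms n p' z' -> Hmod_hom n p z p' z' phi ->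
      gmod_hom n p z p' z' (loc_map phi)) /\
  (* ... functorially *)
  (forall (V : lmodType K) (x : loc V), loc_map id x = x) /\
  (forall (U V W : lmodType K) (phi : U -> V) (psi : V -> W) (x : loc U),
      loc_map (psi \o phi) x = loc_map psi (loc_map phi x)) /\
  (* F(M) = 0 for simple M with z acting as 0 *)
  (forall (V : lmodType K) (p : nat -> V -> V) (z : V -> V),
      Hmod_axioms n p z -> Hsimple n p z -> (forall v, z v = 0) -> loc_trivial z) /\
  (* F(M) simple for simple M with z acting as a nonzero scalar *)
  (forall (V : lmodType K) (p : nat -> V -> V) (z : V -> V) (c : K),
      Hmod_axioms n p z -> Hsimple n p z -> c != 0 -> (forall v, z v = c *: v) ->
      gsimple n p z).
Proof.
split; first by move=> V p z; exact: gmod_struct_of_Hmod.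
split; first by move=> V W p z p' z' phi _ _; exact: gmod_hom_loc_map.
split; first by move=> V [].
split; first by move=> U V W phi psi [].
split; first by move=> V p z _ _; exact: loc_trivial_z0.
by move=> V p z c _; exact: gsimple_scalar.
Qed.
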